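(* Let $H\in(0,1)$ and let $B^H$ be a fractional Brownian motion on $[0,1]$ with Hurst index $H$. For all $k\ge1$ and $j=0,1,\dots,2^{k-1}-1$, $$\mathbb{V}\bigl(B^H(t^k_{2j+1})\,\big|\,\mathbf{B}^H_{k-1}\bigr)\le 2\cdot 2^{-2kH},$$ where $\mathbf{B}^H_{k-1}=(B^H(t^{k-1}_0),\dots,B^H(t^{k-1}_{2^{k-1}}))$ and the left side is the (deterministic) conditional variance.
   Context: A fractional Brownian motion with Hurst index $H$ is a centered Gaussian process with $B^H(0)=0$ and covariance $\mathbb{E}[B^H(s)B^H(t)]=\tfrac12(|s|^{2H}+|t|^{2H}-|s-t|^{2H})$. $t^n_i=i/2^n$. *)

From HB Require Import structures.
From mathcomp Require Import all_boot all_order all_algebra.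
From mathcomp Require Import all_classical all_reals all_analysis.
Set Implicit Arguments. Unset Strict Implicit. Unset Printing Implicit Defensive.
Import Order.TTheory GRing.Theory Num.Theory.
Local Open Scope classical_set_scope.
Local Open Scope ring_scope.

Definition fbm_cov {R : realType} (H : R) (s t : R) : R :=
  (`|s| `^ (2 * H) + `|t| `^ (2 * H) - `|s - t| `^ (2 * H)) / 2.

Definition dyad {R : realType} (n i : nat) : R := i%:R / (2 ^+ n).

(* For jointly Gaussian
   centered vectors the conditional variance is deterministic and equals the
   mean-square error of the best linear predictor:
     inf_a E[(X(x) - sum_i a_i X(y_i))^2]
   which, expanded through the covariance, is the quantity below. *)
Definition gauss_cond_var {R : realType} (C : R -> R -> R) (x : R)
    (m : nat) (y : 'I_m -> R) : R :=
  inf [set v | exists a : 'I_m -> R,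
     v = C x x - 2 * (\sum_(i < m) a i * C x (y i))
         + \sum_(i < m) \sum_(j < m) a i * a j * C (y i) (y j)].

From HB Require Import structures.
From mathcomp Require Import all_boot all_order all_algebra.
From mathcomp Require Import all_classical all_reals all_analysis.
From mathcomp Require Import ring.
Import Order.TTheory GRing.Theory Num.Theory.
Local Open Scope ring_scope.

(* The conditional variance is at most the mean-square error of any single
   linear predictor; predicting B^H(t^k_{2j+1}) by its left neighbour
   B^H(t^k_{2j}) = B^H(t^{k-1}_j) costs E[(B^H(t) - B^H(s))^2] = |t - s|^{2H}
   = 2^{-2kH}. *)

Lemma inf_le_nonneg {R : realType} (S : set R) (v : R) :
  S v -> 0 <= v -> inf S <= v.
Proof.
move=> Sv v_ge0; have [lbS|nlbS] := pselect (has_lbound S).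
  exact: ge_inf.
by rewrite inf_out // => -[_].
Qed.

Lemma sum_delta_mul {R : pzSemiRingType} (m : nat) (i : 'I_m) (F : 'I_m -> R) :
  \sum_(l < m) (l == i)%:R * F l = F i.
Proof.
under eq_bigr => l _ do rewrite mulr_natl mulrb.
by rewrite -big_mkcond big_pred1_eq.
Qed.

Lemma gauss_cond_var_le_increment {R : realType} (C : R -> R -> R) (x : R)
    (m : nat) (y : 'I_m -> R) (i : 'I_m) :
  0 <= C x x - 2 * C x (y i) + C (y i) (y i) ->
  gauss_cond_var C x y <= C x x - 2 * C x (y i) + C (y i) (y i).
Proof.
apply: inf_le_nonneg; exists (fun l => (l == i)%:R).
rewrite sum_delta_mul.
under eq_bigr do under eq_bigr do rewrite -mulrA.
under eq_bigr do rewrite -mulr_sumr sum_delta_mul.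
by rewrite sum_delta_mul.
Qed.

Lemma fbm_cov_increment {R : realType} (H s t : R) : H != 0 ->
  fbm_cov H s s - 2 * fbm_cov H s t + fbm_cov H t t = `|s - t| `^ (2 * H).
Proof.
move=> H_neq0; rewrite /fbm_cov !subrr normr0 powR0 ?mulf_neq0 //.
by field.
Qed.

Lemma dyad_odd_sub_even {R : realType} (k j : nat) :
  dyad k.+1 (2 * j + 1) - dyad k j = (2 ^+ k.+1 : R)^-1.
Proof.
rewrite /dyad exprS natrD natrM.
by field; rewrite expf_neq0.
Qed.

Lemma powR_invXn {R : realType} (b a : R) (n : nat) : 0 <= b ->
  (b ^+ n)^-1 `^ a = b `^ (- (n%:R * a)).
Proof.
by move=> b_ge0; rewrite -powR_mulrn // -powRN -powRrM mulNr.
Qed.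

Theorem lemma1 (R : realType) (H : R) (hH0 : 0 < H) (hH1 : H < 1)
    (k j : nat) (hk : (1 <= k)%N) (hj : (j < 2 ^ k.-1)%N) :
  gauss_cond_var (fbm_cov H) (dyad k (2 * j + 1))
    (fun i : 'I_(2 ^ k.-1).+1 => dyad k.-1 i)
  <= 2 * (2 `^ (- (2 * k%:R * H))).
Proof.
case: k hk hj => // k _ /= hj.
have incr : `|dyad k.+1 (2 * j + 1) - dyad k j| `^ (2 * H)
            = 2 `^ (- (2 * k.+1%:R * H)) :> R.
  rewrite dyad_odd_sub_even ger0_norm ?invr_ge0 ?exprn_ge0 // powR_invXn //.
  by rewrite mulrCA mulrA.
have := gauss_cond_var_le_increment (fbm_cov H) (dyad k.+1 (2 * j + 1)) _
  (fun i : 'I_(2 ^ k).+1 => dyad k i) (Ordinal (leqW hj)).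
rewrite /= fbm_cov_increment ?gt_eqF // incr.
move=> /(_ (powR_ge0 _ _)) /le_trans; apply.
by rewrite ler_pMl ?powR_gt0 // ler1n.
Qed.
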